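(* Let $\psi$ be a formula of the positive Boolean closure $\mathcal B^+(\mathrm{HyperLTL})$. Then there exists a HyperLTL formula $\psi^*$ in prenex form that is equivalent to $\psi$ (i.e. $\llbracket\psi^*\rrbracket_T(\Pi)=\llbracket\psi\rrbracket_T(\Pi)$ for every non-empty set of traces $T$ and every trace assignment $\Pi$ defined on the free variables), such that $\alpha(\psi^* )\le\alpha(\psi)+1$ and $\psi^*$ contains the same number of existential quantifiers and the same number of universal quantifiers as $\psi$.
   Context: Fix a finite set $\mathrm{AP}$ of atomic propositions and an infinite set $\mathcal V$ of trace variables. A trace is an infinite sequence $t=t[0]t[1]\cdots$ with $t[i]\in[0,1]^{\mathrm{AP}}$; $t[i,\infty]$ is its suffix from position $i$. A trace assignment $\Pi$ is a partial map from $\mathcal V$ to traces; $\Pi[i,\infty]$ is $\pi\mapsto\Pi(\pi)[i,\infty]$, $\Pi[\pi\mapsto t]$ is $\Pi$ updated at $\pi$. $\mathcal B^+(\mathrm{HyperLTL})$ is given by the grammar $\psi::=\exists\pi\,\psi\mid\forall\pi\,\psi\mid\psi\vee\psi\mid\psi\wedge\psi\mid\phi$, $\phi::=p_\pi\mid\neg\phi\mid\phi\vee\phi\mid X\phi\mid\phi U\phi$ ($p\in\mathrm{AP}$, $\pi\in\mathcal V$). Semantics for non-empty $T$: $\llbracket p_\pi\rrbracket_T(\Pi)=\Pi(\pi)[0](p)$, $\llbracket\neg\phi\rrbracket=1-\llbracket\phi\rrbracket$, $\vee$ is $\max$, $\wedge$ is $\min$, $\llbracket X\phi\rrbracket_T(\Pi)=\llbracket\phi\rrbracket_T(\Pi[1,\infty])$,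 $\llbracket\phi_1U\phi_2\rrbracket_T(\Pi)=\sup_{i\ge0}\min\big(\llbracket\phi_2\rrbracket_T(\Pi[i,\infty]),\min_{0\le j<i}\llbracket\phi_1\rrbracket_T(\Pi[j,\infty])\big)$, $\llbracket\forall\pi\,\psi\rrbracket_T(\Pi)=\inf_{t\in T}\llbracket\psi\rrbracket_T(\Pi[\pi\mapsto t])$, $\llbracket\exists\pi\,\psi\rrbracket_T(\Pi)=\sup_{t\in T}\llbracket\psi\rrbracket_T(\Pi[\pi\mapsto t])$. HyperLTL is the fragment of formulas in prenex form: a sequence of quantifiers followed by a quantifier-free formula $\phi$. The alternation depth $\alpha(\psi)$ is the maximal number of alternations between existential and universal quantifiers (in either direction) along a branch of the syntax tree of $\psi$. *)

From HB Require Import structures.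
From mathcomp Require Import all_boot all_order all_algebra.
From mathcomp Require Import boolp classical_sets reals.
Set Implicit Arguments. Unset Strict Implicit. Unset Printing Implicit Defensive.
Import Order.TTheory GRing.Theory Num.Theory.
Local Open Scope classical_set_scope.
Local Open Scope ring_scope.

Section Syntax.
Variables (AP : finType) (V : eqType).

Inductive qf : Type :=
| QAtom : AP -> V -> qf
| QNeg : qf -> qf
| QOr : qf -> qf -> qf
| QNext : qf -> qf
| QUntil : qf -> qf -> qf.

Inductive bform : Type :=
| BEx : V -> bform -> bform
| BAll : V -> bform -> bform
| BOr : bform -> bform -> bform
| BAnd : bform -> bform -> bform
| BQF : qf -> bform.

(* HyperLTL = prenex form: quantifier prefix followed by a qf formula *)
Fixpoint prenex (f : bform) : bool :=
  match f with
  | BEx _ g | BAll _ g => prenex g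
  | BQF _ => true
  | _ => false
  end.

Fixpoint fv_qf (p : qf) : seq V :=
  match p with
  | QAtom _ x => [:: x]
  | QNeg p1 | QNext p1 => fv_qf p1
  | QOr p1 p2 | QUntil p1 p2 => fv_qf p1 ++ fv_qf p2
  end.

Fixpoint fv (f : bform) : seq V :=
  match f with
  | BEx x g | BAll x g => [seq y <- fv g | y != x]
  | BOr g h | BAnd g h => fv g ++ fv h
  | BQF p => fv_qf p
  end.

Fixpoint num_ex (f : bform) : nat :=
  match f with
  | BEx _ g => (num_ex g).+1
  | BAll _ g => num_ex g
  | BOr g h | BAnd g h => num_ex g + num_ex h
  | BQF _ => 0
  end.

Fixpoint num_all (f : bform) : nat :=
  match f with
  | BEx _ g => num_all g
  | BAll _ g => (num_all g).+1
  | BOr g h | BAnd g h => num_all g + num_all h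
  | BQF _ => 0
  end.

(* alternations along branches; [last] = kind of the last quantifier met on
   the branch so far (Some true = exists, Some false = forall). *)
Fixpoint alt_from (last : option bool) (f : bform) : nat :=
  match f with
  | BEx _ g => (last == Some false) + alt_from (Some true) g
  | BAll _ g => (last == Some true) + alt_from (Some false) g
  | BOr g h | BAnd g h => maxn (alt_from last g) (alt_from last h)
  | BQF _ => 0
  end.

Definition alt_depth (f : bform) : nat := alt_from None f.

End Syntax.

Section Semantics.
Variables (AP : finType) (V : eqType) (R : realType).

Definition trace := nat -> AP -> R.
Definition is_trace (t : trace) : Prop := forall i p, 0 <= t i p <= 1.

Definition assignment := V -> option trace.

Definition suffix (t : trace) (i : nat) : trace := fun n => t (i + n)%N.
Definition asuffix (Pi : assignment) (i : nat) : assignment :=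
  fun x => omap (fun t => suffix t i) (Pi x).
Definition aupdate (Pi : assignment) (x : V) (t : trace) : assignment :=
  fun y => if y == x then Some t else Pi y.

(* value of p_x; Pi is only ever used on its domain (free variables) *)
Definition atom_val (Pi : assignment) (p : AP) (x : V) : R :=
  match Pi x with Some t => t 0%N p | None => 0 end.

Fixpoint eval_qf (phi : qf AP V) (Pi : assignment) : R :=
  match phi with
  | QAtom p x => atom_val Pi p x
  | QNeg p1 => 1 - eval_qf p1 Pi
  | QOr p1 p2 => Num.max (eval_qf p1 Pi) (eval_qf p2 Pi)
  | QNext p1 => eval_qf p1 (asuffix Pi 1)
  | QUntil p1 p2 =>
      sup (range (fun i : nat =>
        Num.min (eval_qf p2 (asuffix Pi i))
                (\big[Num.min/1]_(j < i) eval_qf p1 (asuffix Pi j))))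
  end.

Fixpoint eval (T : set trace) (f : bform AP V) (Pi : assignment) : R :=
  match f with
  | BEx x g => sup [set eval T g (aupdate Pi x t) | t in T]
  | BAll x g => inf [set eval T g (aupdate Pi x t) | t in T]
  | BOr g h => Num.max (eval T g Pi) (eval T h Pi)
  | BAnd g h => Num.min (eval T g Pi) (eval T h Pi)
  | BQF phi => eval_qf phi Pi
  end.

End Semantics.

Definition infinite_vars (V : eqType) : Prop := forall s : seq V, exists x, x \notin s.

From HB Require Import structures.
From mathcomp Require Import all_boot all_order all_algebra.
From mathcomp Require Import boolp classical_sets reals.
From mathcomp Require Import lra zify.
Set Implicit Arguments. Unset Strict Implicit. Unset Printing Implicit Defensive.
Import Order.TTheory GRing.Theory Num.Theory.
Local Open Scope classical_set_scope.
Local Open Scope ring_scope.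

(* The semantics reads ∃/∀ as sup/inf and ∨/∧ as max/min, and the supremum
   or infimum of a bounded family commutes with max and min against a
   constant.  Hence, if [x] is not free in [h], (Q x. g) ∘ h and
   Q x. (g ∘ h) have the same value.  Once every bound variable is renamed
   to a fresh name, the quantifier prefixes of both sides of a connective
   can thus be pulled out in any interleaving.  Interleaving them greedily,
   by continuing with a quantifier of the current kind as long as one side
   offers one, alternates no more often than the worse of the two sides,
   counting from the kind of the enclosing quantifier.  The root has no
   enclosing quantifier, which costs at most one extra alternation. *)

Section Connectives.
Variable R : realType.

Definition conn (o : bool) (a b : R) : R := if o then Num.max a b else Num.min a b.

Definition quant (q : bool) (E : set R) : R := if q then sup E else inf E.

Lemma connC o a b : conn o a b = conn o b a.
Proof. by case: o; rewrite /conn; [rewrite maxC | rewrite minC]. Qed.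

Lemma ler_conn o a b c d : a <= b -> c <= d -> conn o a c <= conn o b d.
Proof. by case: o => ab cd; [apply: le_max2 | apply: le_min2]. Qed.

Lemma oppr_conn o a b : - conn o a b = conn (~~ o) (- a) (- b).
Proof. by case: o; rewrite /conn ?oppr_max ?oppr_min. Qed.

Lemma conn_in01 o a b : 0 <= a <= 1 -> 0 <= b <= 1 -> 0 <= conn o a b <= 1.
Proof.
case: o => /andP[a0 a1] /andP[b0 b1]; rewrite /conn.
  by rewrite le_max a0 ge_max a1 b1.
by rewrite le_min a0 b0 ge_min a1.
Qed.

Lemma sup_between (E : set R) a b :
  E !=set0 -> (forall x, E x -> a <= x <= b) -> a <= sup E <= b.
Proof.
move=> [x0 Ex0] Eab; have /andP[ax0 _] := Eab x0 Ex0.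
have ubE : has_ubound E by exists b => x /Eab /andP[].
apply/andP; split; first exact: le_trans ax0 (ub_le_sup ubE Ex0).
by apply: ge_sup; [exists x0 | move=> x /Eab /andP[]].
Qed.

Lemma inf_between (E : set R) a b :
  E !=set0 -> (forall x, E x -> a <= x <= b) -> a <= inf E <= b.
Proof.
move=> [x0 Ex0] Eab; have /andP[_ x0b] := Eab x0 Ex0.
have lbE : has_lbound E by exists a => x /Eab /andP[].
apply/andP; split; last exact: le_trans (ge_inf lbE Ex0) x0b.
by apply: lb_le_inf; [exists x0 | move=> x /Eab /andP[]].
Qed.

Section Images.
Variables (T : Type) (A : set T).

Lemma sup_conn (f : T -> R) o c : A !=set0 -> has_ubound (f @` A) ->
  sup [set conn o (f t) c | t in A] = conn o (sup (f @` A)) c.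
Proof.
move=> [t0 At0] [M ubM].
have fA0 : f @` A !=set0 by exists (f t0), t0.
have ub_sup t : A t -> f t <= sup (f @` A).
  by move=> At; apply: ub_le_sup; [exists M | exists t].
have ubC : has_ubound [set conn o (f t) c | t in A].
  by exists (conn o M c) => _ [t At <-]; apply: ler_conn => //; apply: ubM; exists t.
have ub_supC t : A t -> conn o (f t) c <= sup [set conn o (f t) c | t in A].
  by move=> At; apply: ub_le_sup => //; exists t.
apply/eqP; rewrite eq_le; apply/andP; split.
  apply: ge_sup; first by exists (conn o (f t0) c), t0.
  by move=> _ [t At <-]; apply: ler_conn => //; apply: ub_sup.
case: o {ubC} ub_supC => ub_supC; rewrite /conn.
  rewrite ge_max; apply/andP; split; last first.
    by apply: le_trans (ub_supC t0 At0); rewrite le_max lexx orbT.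
  apply: ge_sup => // _ [t At <-].
  by apply: le_trans (ub_supC t At); rewrite le_max lexx.
(* if the min exceeded the sup, some [f t] would exceed it too *)
rewrite leNgt; apply/negP; rewrite lt_min => /andP[lt_f lt_c].
have [_ [t At <-] lt_ft] := sup_gt fA0 lt_f.
by have := ub_supC t At; rewrite leNgt lt_min lt_ft lt_c.
Qed.

Lemma inf_conn (f : T -> R) o c : A !=set0 -> has_lbound (f @` A) ->
  inf [set conn o (f t) c | t in A] = conn o (inf (f @` A)) c.
Proof.
move=> A0 [m lbm]; rewrite /inf !image_comp.
rewrite (eq_imagel (f' := fun t => conn (~~ o) (- f t) (- c))); last first.
  by move=> t _; rewrite /= oppr_conn.
rewrite sup_conn // ?oppr_conn ?negbK ?opprK //.
by exists (- m) => _ [t At <-]; rewrite /= lerNl opprK; apply: lbm; exists t.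
Qed.

Lemma quant_conn (f : T -> R) q o c :
  A !=set0 -> (forall t, A t -> 0 <= f t <= 1) ->
  quant q [set conn o (f t) c | t in A] = conn o (quant q (f @` A)) c.
Proof.
move=> A0 f01; case: q => /=.
  by apply: sup_conn => //; exists 1 => _ [t /f01 /andP[_ ?] <-].
by apply: inf_conn => //; exists 0 => _ [t /f01 /andP[? _] <-].
Qed.

End Images.
End Connectives.

Section Semantics.
Variables (AP : finType) (V : eqType) (R : realType).
Implicit Types (phi : qf AP V) (psi : bform AP V) (Pi : assignment AP V R).

Definition trace_assignment Pi := forall x t, Pi x = Some t -> is_trace t.

Lemma trace_assignment_suffix Pi i :
  trace_assignment Pi -> trace_assignment (asuffix Pi i).
Proof.
move=> HPi x t; rewrite /asuffix; case Ex: (Pi x) => [t'|] //= [<-] j p.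
exact: (HPi x t' Ex).
Qed.

Lemma trace_assignment_update Pi x t :
  trace_assignment Pi -> is_trace t -> trace_assignment (aupdate Pi x t).
Proof. by move=> HPi Ht y t'; rewrite /aupdate; case: eqP => _; [case=> <- | apply: HPi]. Qed.

Lemma eval_qf_in01 phi Pi : trace_assignment Pi -> 0 <= eval_qf phi Pi <= 1.
Proof.
elim: phi Pi => [p x|p IH|p1 IH1 p2 IH2|p IH|p1 IH1 p2 IH2] Pi HPi /=.
- rewrite /atom_val; case Ex: (Pi x) => [t|]; [exact: (HPi x t Ex) | by rewrite lexx ler01].
- by have /andP[? ?] := IH Pi HPi; apply/andP; split; lra.
- exact: (conn_in01 true (IH1 Pi HPi) (IH2 Pi HPi)).
- exact/IH/trace_assignment_suffix.
- apply: sup_between => [|_ [i _ <-]]; first by eexists; exists 0%N.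
  apply: (conn_in01 false); first exact/IH2/trace_assignment_suffix.
  elim/big_ind: _ => [|a b|j _]; first by rewrite ler01 lexx.
    exact: (conn_in01 false).
  exact/IH1/trace_assignment_suffix.
Qed.

Lemma eq_eval_QUntil a1 a2 b1 b2 Pi Pi' :
  (forall i, eval_qf a1 (asuffix Pi i) = eval_qf b1 (asuffix Pi' i)) ->
  (forall i, eval_qf a2 (asuffix Pi i) = eval_qf b2 (asuffix Pi' i)) ->
  eval_qf (QUntil a1 a2) Pi = eval_qf (QUntil b1 b2) Pi'.
Proof.
move=> E1 E2 /=; do 2 f_equal; apply: funext => i.
by rewrite E2; congr Num.min; apply: eq_bigr => j _; rewrite E1.
Qed.

Lemma eval_qf_ext phi Pi Pi' :
  {in fv_qf phi, Pi =1 Pi'} -> eval_qf phi Pi = eval_qf phi Pi'.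
Proof.
elim: phi Pi Pi' => [p x|p IH|p1 IH1 p2 IH2|p IH|p1 IH1 p2 IH2] Pi Pi' eqPi /=.
- by rewrite /atom_val eqPi // mem_seq1.
- by rewrite (IH Pi Pi').
- by rewrite (IH1 Pi Pi') ?(IH2 Pi Pi') // => z z_fv; rewrite eqPi // mem_cat z_fv ?orbT.
- by apply: IH => z z_fv; rewrite /asuffix eqPi.
- by apply: eq_eval_QUntil => i; [apply: IH1 | apply: IH2] => z z_fv;
    rewrite /asuffix eqPi // mem_cat z_fv ?orbT.
Qed.

Lemma eval_ext (T : set (trace AP R)) psi Pi Pi' :
  {in fv psi, Pi =1 Pi'} -> eval T psi Pi = eval T psi Pi'.
Proof.
elim: psi Pi Pi' => [x g IH|x g IH|g IHg h IHh|g IHg h IHh|phi] Pi Pi' eqPi /=.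
- congr sup; apply: eq_imagel => t _; apply: IH => z z_fv; rewrite /aupdate.
  by case: eqP => // /eqP zx; rewrite eqPi // mem_filter zx z_fv.
- congr inf; apply: eq_imagel => t _; apply: IH => z z_fv; rewrite /aupdate.
  by case: eqP => // /eqP zx; rewrite eqPi // mem_filter zx z_fv.
- by rewrite (IHg Pi Pi') ?(IHh Pi Pi') // => z z_fv; rewrite eqPi // mem_cat z_fv ?orbT.
- by rewrite (IHg Pi Pi') ?(IHh Pi Pi') // => z z_fv; rewrite eqPi // mem_cat z_fv ?orbT.
- exact: eval_qf_ext.
Qed.

Fixpoint qf_rename (s : V -> V) phi : qf AP V :=
  match phi with
  | QAtom a x => QAtom a (s x)
  | QNeg p => QNeg (qf_rename s p)
  | QOr p1 p2 => QOr (qf_rename s p1) (qf_rename s p2)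
  | QNext p => QNext (qf_rename s p)
  | QUntil p1 p2 => QUntil (qf_rename s p1) (qf_rename s p2)
  end.

Lemma fv_qf_rename s phi : fv_qf (qf_rename s phi) = map s (fv_qf phi).
Proof. by elim: phi => //= [p1 -> p2 ->|p1 -> p2 ->]; rewrite map_cat. Qed.

Lemma eval_qf_rename s phi Pi : eval_qf (qf_rename s phi) Pi = eval_qf phi (Pi \o s).
Proof.
elim: phi Pi => [a x|p IH|p1 IH1 p2 IH2|p IH|p1 IH1 p2 IH2] Pi //=.
- by rewrite IH.
- by rewrite IH1 IH2.
- by apply: eq_eval_QUntil => i; rewrite ?IH1 ?IH2.
Qed.

Variables (T : set (trace AP R)) (T0 : T !=set0) (HT : forall t, T t -> is_trace t).

Lemma eval_in01 psi Pi : trace_assignment Pi -> 0 <= eval T psi Pi <= 1.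
Proof.
elim: psi Pi => [x g IH|x g IH|g IHg h IHh|g IHg h IHh|phi] Pi HPi /=.
- apply: sup_between => [|_ [t Tt <-]]; first by case: T0 => t Tt; eexists; exists t.
  exact/IH/trace_assignment_update/HT.
- apply: inf_between => [|_ [t Tt <-]]; first by case: T0 => t Tt; eexists; exists t.
  exact/IH/trace_assignment_update/HT.
- exact: (conn_in01 true (IHg Pi HPi) (IHh Pi HPi)).
- exact: (conn_in01 false (IHg Pi HPi) (IHh Pi HPi)).
- exact: eval_qf_in01.
Qed.

End Semantics.

Inductive shuffle {A : Type} : seq A -> seq A -> seq A -> Prop :=
| shuffle_nil : shuffle [::] [::] [::]
| shuffle_consl a s1 s2 s : shuffle s1 s2 s -> shuffle (a :: s1) s2 (a :: s)
| shuffle_consr a s1 s2 s : shuffle s1 s2 s -> shuffle s1 (a :: s2) (a :: s).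

Lemma shuffle0s {A : Type} (s : seq A) : shuffle [::] s s.
Proof. by elim: s => [|a s IH]; constructor. Qed.

Lemma shuffles0 {A : Type} (s : seq A) : shuffle s [::] s.
Proof. by elim: s => [|a s IH]; constructor. Qed.

Lemma perm_shuffle {A : eqType} (s1 s2 s : seq A) : shuffle s1 s2 s -> perm_eq s (s1 ++ s2).
Proof.
elim=> //= [a t1 t2 t _ IH|a t1 t2 t _ IH]; first by rewrite perm_cons.
by rewrite -[a :: t2]cat1s perm_sym perm_catCA /= perm_cons perm_sym.
Qed.

Section Prefixes.
Variables (AP : finType) (V : eqType).
Implicit Types (g h : bform AP V) (m : qf AP V) (p : seq (bool * V)).

Definition bquant (q : bool) (x : V) g : bform AP V := if q then BEx x g else BAll x g.

Definition bconn (o : bool) g h : bform AP V := if o then BOr g h else BAnd g h.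

(* [qf] has no conjunction: it is encoded by De Morgan. *)
Definition qf_conn (o : bool) (m1 m2 : qf AP V) : qf AP V :=
  if o then QOr m1 m2 else QNeg (QOr (QNeg m1) (QNeg m2)).

Fixpoint prenex_of p m : bform AP V :=
  if p is (q, x) :: p' then bquant q x (prenex_of p' m) else BQF m.

Fixpoint prefix_alt (l : option bool) p : nat :=
  if p is (q, _) :: p' then (l == Some (~~ q)) + prefix_alt (Some q) p' else 0.

Lemma fv_bquant q x g : fv (bquant q x g) = [seq y <- fv g | y != x].
Proof. by case: q. Qed.

Lemma fv_bconn o g h : fv (bconn o g h) = fv g ++ fv h.
Proof. by case: o. Qed.

Lemma fv_qf_conn o m1 m2 : fv_qf (qf_conn o m1 m2) = fv_qf m1 ++ fv_qf m2.
Proof. by case: o. Qed.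

Lemma prenex_prenex_of p m : prenex (prenex_of p m).
Proof. by elim: p => [|[[] x] p IH]. Qed.

Lemma fv_prenex_of p m : {subset fv (prenex_of p m) <= fv_qf m}.
Proof.
by elim: p => [|[q x] p IH] //= z; rewrite fv_bquant mem_filter => /andP[_ /IH].
Qed.

Lemma alt_from_prenex_of l p m : alt_from l (prenex_of p m) = prefix_alt l p.
Proof. by elim: p l => [|[[] x] p IH] l //=; rewrite IH. Qed.

Lemma num_ex_prenex_of p m : num_ex (prenex_of p m) = count fst p.
Proof. by elim: p => [|[[] x] p IH] //=; rewrite IH. Qed.

Lemma num_all_prenex_of p m : num_all (prenex_of p m) = count (fun qx => ~~ qx.1) p.
Proof. by elim: p => [|[[] x] p IH] //=; rewrite IH. Qed.

Lemma prefix_alt_None_le b p : (prefix_alt None p <= prefix_alt (Some b) p)%N.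
Proof. by case: p => [|[q x] p] //=; rewrite leq_addl. Qed.

Lemma alt_from_Some_le b g : (alt_from (Some b) g <= (alt_from None g).+1)%N.
Proof.
elim: g b => [x g IH|x g IH|g IHg h IHh|g IHg h IHh|phi] b //=.
- by have := IH true; lia.
- by have := IH false; lia.
- by have := IHg b; have := IHh b; lia.
- by have := IHg b; have := IHh b; lia.
Qed.

Lemma prefix_alt_cons b q x p :
  prefix_alt (Some b) ((q, x) :: p) = ((q != b) + prefix_alt (Some q) p)%N.
Proof. by case: b; case: q. Qed.

(* Greedy interleaving: keep taking a quantifier of the current kind while
   either prefix offers one; only when both switch kind does [w] alternate. *)
Lemma shuffle_prefix_alt_maxn b p1 p2 : exists2 w, shuffle p1 p2 w &
  (prefix_alt (Some b) w <= maxn (prefix_alt (Some b) p1) (prefix_alt (Some b) p2))%N.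
Proof.
elim: p1 b p2 => [|[q1 x1] p1 IH1] b p2.
  by exists p2; [exact: shuffle0s | rewrite max0n].
elim: p2 b => [|[q2 x2] p2 IH2] b.
  by exists ((q1, x1) :: p1); [exact: shuffles0 | rewrite maxn0].
have [<-|ne1] := eqVneq q1 b.
  have [w sh alt_w] := IH1 q1 ((q2, x2) :: p2).
  exists ((q1, x1) :: w); first exact: shuffle_consl.
  by move: alt_w; rewrite !prefix_alt_cons eqxx; lia.
have [<-|ne2] := eqVneq q2 b.
  have [w sh alt_w] := IH2 q2.
  exists ((q2, x2) :: w); first exact: shuffle_consr.
  by move: alt_w; rewrite !prefix_alt_cons eqxx; lia.
have eq_q : q2 = q1 by move: ne1 ne2; case: (q1); case: (q2); case: (b).
subst q2; have [w sh alt_w] := IH1 q1 ((q1, x2) :: p2).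
exists ((q1, x1) :: w); first exact: shuffle_consl.
by move: alt_w; rewrite !prefix_alt_cons ne1 eqxx; lia.
Qed.

End Prefixes.

Section PrenexLaws.
Variables (AP : finType) (V : eqType) (R : realType).
Variables (T : set (trace AP R)) (T0 : T !=set0) (HT : forall t, T t -> is_trace t).
Implicit Types (g h : bform AP V) (m : qf AP V) (p : seq (bool * V)) (Pi : assignment AP V R).

Lemma eval_bquant q x g Pi :
  eval T (bquant q x g) Pi = quant q [set eval T g (aupdate Pi x t) | t in T].
Proof. by case: q. Qed.

Lemma eval_bconn o g h Pi : eval T (bconn o g h) Pi = conn o (eval T g Pi) (eval T h Pi).
Proof. by case: o. Qed.

Lemma eval_bconnC o g h Pi : eval T (bconn o g h) Pi = eval T (bconn o h g) Pi.
Proof. by rewrite !eval_bconn connC. Qed.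

Lemma eval_qf_conn o m1 m2 Pi :
  eval_qf (qf_conn o m1 m2) Pi = conn o (eval_qf m1 Pi) (eval_qf m2 Pi).
Proof.
case: o => //=; rewrite /conn.
have [le12|lt21] := leP (eval_qf m1 Pi) (eval_qf m2 Pi).
  by rewrite (max_idPl (_ : 1 - _ <= 1 - _)); lra.
by rewrite (max_idPr (_ : 1 - _ <= 1 - _)); lra.
Qed.

Lemma eval_bquant_bconnl q x o g h Pi : trace_assignment Pi -> x \notin fv h ->
  eval T (bquant q x (bconn o g h)) Pi = eval T (bconn o (bquant q x g) h) Pi.
Proof.
move=> HPi xh; rewrite eval_bconn !eval_bquant.
have h_upd t : eval T h (aupdate Pi x t) = eval T h Pi.
  apply: eval_ext => z zh; rewrite /aupdate; case: eqP => // zx.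
  by rewrite -zx zh in xh.
rewrite (eq_imagel (f' := fun t => conn o (eval T g (aupdate Pi x t)) (eval T h Pi))).
  by apply: quant_conn => // t Tt; exact/(eval_in01 T0 HT)/trace_assignment_update/HT.
by move=> t _; rewrite eval_bconn h_upd.
Qed.

Lemma eval_bquant_bconnr q x o g h Pi : trace_assignment Pi -> x \notin fv g ->
  eval T (bquant q x (bconn o g h)) Pi = eval T (bconn o g (bquant q x h)) Pi.
Proof.
move=> HPi xg; rewrite eval_bconnC -eval_bquant_bconnl // !eval_bquant.
by congr (quant q); apply: eq_imagel => t _; exact: eval_bconnC.
Qed.

Lemma eval_prenex_of_shuffle o p1 p2 w m1 m2 : shuffle p1 p2 w ->
  {in map snd p1, forall y, y \notin fv_qf m2} ->
  {in map snd p2, forall y, y \notin fv_qf m1} ->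
  forall Pi, trace_assignment Pi ->
  eval T (prenex_of w (qf_conn o m1 m2)) Pi =
  eval T (bconn o (prenex_of p1 m1) (prenex_of p2 m2)) Pi.
Proof.
have not_fv p m y : y \notin fv_qf m -> y \notin fv (prenex_of p m).
  by apply: contra => /fv_prenex_of.
elim=> [|[q x] s1 s2 s _ IH|[q x] s1 s2 s _ IH] /= fv1 fv2 Pi HPi.
- by rewrite eval_bconn eval_qf_conn.
- rewrite -eval_bquant_bconnl ?not_fv ?fv1 ?mem_head // !eval_bquant.
  congr (quant q); apply: eq_imagel => t Tt; apply: IH => //.
    by move=> y ys1; apply: fv1; rewrite inE ys1 orbT.
  exact/trace_assignment_update/HT.
- rewrite -eval_bquant_bconnr ?not_fv ?fv2 ?mem_head // !eval_bquant.
  congr (quant q); apply: eq_imagel => t Tt; apply: IH => //.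
    by move=> y ys2; apply: fv2; rewrite inE ys2 orbT.
  exact/trace_assignment_update/HT.
Qed.

End PrenexLaws.

Section PrenexForms.
Variables (AP : finType) (V : eqType).
Implicit Types (psi g h : bform AP V) (m : qf AP V) (p : seq (bool * V)).

(* [prenex_of p m] is equivalent to [psi] with its free variables renamed
   along [sg] into [S]; its bound variables avoid [S] and [A], and its
   alternations are counted below a quantifier of kind [b]. *)
Record prenex_form psi (b : bool) (sg : V -> V) (S A : seq V) p m : Prop := PrenexForm {
  prefix_fresh : {in map snd p, forall y, y \notin S ++ A};
  fv_matrix : {subset fv_qf m <= map snd p ++ S};
  prefix_alt_le : (prefix_alt (Some b) p <= alt_from (Some b) psi)%N;
  count_ex : count fst p = num_ex psi;
  count_all : count (fun qx => ~~ qx.1) p = num_all psi;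
  eval_prenex_form : forall (R : realType) (T : set (trace AP R)) (Pi : assignment AP V R),
    T !=set0 -> (forall t, T t -> is_trace t) -> trace_assignment Pi ->
    eval T (prenex_of p m) Pi = eval T psi (Pi \o sg) }.

Definition has_prenex_forms psi := forall b sg S A,
  {in fv psi, forall z, sg z \in S} -> exists p m, prenex_form psi b sg S A p m.

Lemma has_prenex_forms_BQF phi : has_prenex_forms (BQF phi).
Proof.
move=> b sg S A sgS; exists [::], (qf_rename sg phi); split => //=.
- by move=> y; rewrite fv_qf_rename => /mapP[z zphi ->]; exact: sgS.
- by move=> R T Pi *; rewrite eval_qf_rename.
Qed.

Lemma has_prenex_forms_bquant q x g : infinite_vars V ->
  has_prenex_forms g -> has_prenex_forms (bquant q x g).
Proof.
move=> HV IH b sg S A sgS; have [y ySA] := HV (S ++ A).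
have sgS_g z : z \in fv g -> z != x -> sg z \in S.
  by move=> zg zx; apply: sgS; rewrite fv_bquant mem_filter zx.
pose sg' z := if z == x then y else sg z.
have sg'S : {in fv g, forall z, sg' z \in y :: S}.
  move=> z zg; rewrite /sg' inE; case: (eqVneq z x) => [_|zx]; first by rewrite eqxx.
  by rewrite sgS_g ?orbT.
have [p [m [fresh fvm alt cex call ev]]] := IH q sg' (y :: S) A sg'S.
exists ((q, y) :: p), m; split => /=.
- move=> z; rewrite inE => /predU1P[-> //|/fresh].
  by rewrite inE negb_or => /andP[].
- move=> z /fvm; rewrite !(mem_cat, inE).
  by case/or3P => ->; rewrite ?orbT.
- by move: alt; case: (q); case: (b) => /=; lia.
- by case: (q) => /=; rewrite cex.
- by case: (q) => /=; rewrite call.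
move=> R T Pi T0 HT HPi; rewrite !eval_bquant; congr (quant q).
apply: eq_imagel => t Tt; rewrite ev //; last exact/trace_assignment_update/HT.
apply: eval_ext => z zg; rewrite /= /sg' /aupdate.
case: (eqVneq z x) => [_|zx]; first by rewrite eqxx.
case: eqVneq (sgS_g z zg zx) => // -> yS.
by move: ySA; rewrite mem_cat yS.
Qed.

Lemma has_prenex_forms_bconn o g h :
  has_prenex_forms g -> has_prenex_forms h -> has_prenex_forms (bconn o g h).
Proof.
move=> IHg IHh b sg S A sgS.
have [p1 [m1 [fresh1 fv1 alt1 cex1 call1 ev1]]] : exists p m, prenex_form g b sg S A p m.
  by apply: IHg => z zg; apply: sgS; rewrite fv_bconn mem_cat zg.
have [p2 [m2 [fresh2 fv2 alt2 cex2 call2 ev2]]] :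
    exists p m, prenex_form h b sg S (A ++ map snd p1) p m.
  by apply: IHh => z zh; apply: sgS; rewrite fv_bconn mem_cat zh orbT.
have [w sh alt_w] := shuffle_prefix_alt_maxn b p1 p2.
have perm_w : perm_eq (map snd w) (map snd p1 ++ map snd p2).
  by rewrite -map_cat perm_map // perm_shuffle.
have p1S y : y \in map snd p1 -> y \notin S.
  by move/fresh1; rewrite mem_cat negb_or => /andP[].
have p2Sp1 y : y \in map snd p2 -> (y \notin S) && (y \notin map snd p1).
  by move/fresh2; rewrite !mem_cat !negb_or => /and3P[-> _ ->].
exists w, (qf_conn o m1 m2); split.
- move=> y; rewrite (perm_mem perm_w) mem_cat => /orP[/fresh1 //|/fresh2].
  by rewrite !mem_cat !negb_or => /and3P[-> ->].
- move=> y; rewrite fv_qf_conn !mem_cat (perm_mem perm_w) mem_cat.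
  by case/orP => [/fv1|/fv2]; rewrite mem_cat => /orP[] ->; rewrite ?orbT.
- apply: leq_trans alt_w _; case: (o) => /=; rewrite geq_max !leq_max alt1 alt2 ?orbT //.
- by rewrite (permP (perm_shuffle sh)) count_cat cex1 cex2; case: (o).
- by rewrite (permP (perm_shuffle sh)) count_cat call1 call2; case: (o).
move=> R T Pi T0 HT HPi; rewrite (eval_prenex_of_shuffle T0 HT o sh) //.
- by rewrite !eval_bconn ev1 // ev2.
- move=> y y1; apply/negP => /fv2; rewrite mem_cat => /orP[/p2Sp1|yS].
    by rewrite y1 andbF.
  by have := p1S y y1; rewrite yS.
- move=> y y2; have /andP[yS yp1] := p2Sp1 y y2.
  by apply/negP => /fv1; rewrite mem_cat (negbTE yS) (negbTE yp1).
Qed.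

Lemma bform_has_prenex_forms : infinite_vars V -> forall psi, has_prenex_forms psi.
Proof.
move=> HV; elim=> [x g IH|x g IH|g IHg h IHh|g IHg h IHh|phi].
- exact: (@has_prenex_forms_bquant true x g HV IH).
- exact: (@has_prenex_forms_bquant false x g HV IH).
- exact: (@has_prenex_forms_bconn true g h IHg IHh).
- exact: (@has_prenex_forms_bconn false g h IHg IHh).
- exact: has_prenex_forms_BQF.
Qed.

End PrenexForms.

Theorem mainTheorem5 (AP : finType) (V : eqType) (HV : infinite_vars V)
    (psi : bform AP V) :
  exists psi' : bform AP V,
    [/\ prenex psi',
        (alt_depth psi' <= (alt_depth psi).+1)%N,
        num_ex psi' = num_ex psi,
        num_all psi' = num_all psi &
        forall (R : realType) (T : set (trace AP R)) (Pi : assignment AP V R),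
          T !=set0 ->
          (forall t, T t -> is_trace t) ->
          (forall x t, Pi x = Some t -> is_trace t) ->
          (forall x, x \in fv psi -> Pi x <> None) ->
          eval T psi' Pi = eval T psi Pi].
Proof.
have [p [m pf]] := @bform_has_prenex_forms AP V HV psi true id (fv psi) [::] (fun z => id).
exists (prenex_of p m); split.
- exact: prenex_prenex_of.
- rewrite /alt_depth alt_from_prenex_of (leq_trans (prefix_alt_None_le true p)) //.
  exact: leq_trans (prefix_alt_le pf) (alt_from_Some_le true psi).
- by rewrite num_ex_prenex_of (count_ex pf).
- by rewrite num_all_prenex_of (count_all pf).
(* the equivalence holds whether or not [Pi] is defined on [fv psi] *)
- by move=> R T Pi T0 HT HPi _; exact: (eval_prenex_form pf).
Qed.
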